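(* For an arbitrary channel $W:\mathcal{X}\to\mathcal{Y}$ with $\mathcal{Y}$ finite, any block length $n$, any $0<\delta\le\sqrt{n}\log|\mathcal{Y}|$ and any $x^n\in\mathcal{X}^n$, \[ W_{x^n}(\mathcal{T}^\delta_{x^n})\ge1-2\exp\!\left(-\delta^2/36K(|\mathcal{Y}|)\right). \]
   Context: A channel $W:\mathcal{X}\to\mathcal{Y}$ ($\mathcal{X}$ measurable space) is a measurable map $x\mapsto W_x\in\mathcal{P}(\mathcal{Y})$; $W_{x^n}(y^n)=\prod_{i=1}^nW_{x_i}(y_i)$. Logarithms and exponentials are base 2; $H$ is Shannon entropy. The conditional typical set is $\mathcal{T}^\delta_{x^n}=\{y^n\in\mathcal{Y}^n:|\log W_{x^n}(y^n)+H(W_{x^n})|\le\delta\sqrt{n}\}$, and $K(d)=(\log\max\{d,3\})^2$. *)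

From HB Require Import structures.
From mathcomp Require Import all_boot all_order all_algebra.
From mathcomp Require Import all_classical all_reals all_analysis.
Set Implicit Arguments. Unset Strict Implicit. Unset Printing Implicit Defensive.
Import Order.TTheory GRing.Theory Num.Theory.
Local Open Scope ring_scope.

Section Defs.
Variable R : realType.

Definition log2 (x : R) : R := ln x / ln 2.
Definition exp2 (x : R) : R := 2 `^ x.

Definition is_pmf (Y : finType) (P : Y -> R) : Prop :=
  (forall y, 0 <= P y) /\ \sum_(y : Y) P y = 1.

Definition entropy (Y : finType) (P : Y -> R) : R :=
  - \sum_(y : Y) (if P y == 0 then 0 else P y * log2 (P y)).

Definition prodW (X : Type) (Y : finType) (W : X -> Y -> R) (n : nat)
  (xn : 'I_n -> X) (yn : {ffun 'I_n -> Y}) : R :=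
  \prod_(i < n) W (xn i) (yn i).

Definition typical_set (X : Type) (Y : finType) (W : X -> Y -> R) (n : nat)
  (delta : R) (xn : 'I_n -> X) : {set {ffun 'I_n -> Y}} :=
  [set yn | `| log2 (prodW W xn yn) + entropy (prodW W xn) |
            <= delta * Num.sqrt (n%:R)].

Definition prodW_prob (X : Type) (Y : finType) (W : X -> Y -> R) (n : nat)
  (xn : 'I_n -> X) (A : {set {ffun 'I_n -> Y}}) : R :=
  \sum_(yn in A) prodW W xn yn.

Definition Kconst (d : nat) : R := (log2 (maxn d 3)%:R) ^+ 2.

End Defs.

From HB Require Import structures.
From mathcomp Require Import all_boot all_order all_algebra.
From mathcomp Require Import all_classical all_reals all_analysis.
From mathcomp Require Import lra ring.
Import Order.TTheory GRing.Theory Num.Theory.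
Local Open Scope ring_scope.

(* In nats, [log W_{x^n}(y^n) + H(W_{x^n})] is minus the sum of the [n]
   independent centred information densities [-ln W_{x_i}(y_i) - H(W_{x_i})].
   With [l = ln max(|Y|,3)], each of them has moment generating function at most
   [exp(12 lam^2 l^2)] for [|lam| l <= 1/24]: expand [e^x <= 1 + x + x^2 e^|x|]
   and bound the tilted second moment letter by letter, separating letters of
   probability at least [max(|Y|,3)^-2] (small information, bounded tilt) from
   the rarer ones (whose weight [p] beats the polynomial factor).  A two-sided
   Chernoff bound with the optimal [lam] gives the tail [2 exp(-t^2/(48 n l^2))],
   and [ln 2 <= 3/4] turns it into the base-2 bound with constant 36. *)

Section ExpLnBounds.
Context {R : realType}.
Implicit Types c l s u x : R.

Lemma expR_mul1B_le1 x : x < 1 -> expR x * (1 - x) <= 1.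
Proof.
move=> x_lt1.
rewrite -[leRHS](expRxMexpNx_1 x) ler_pM2l ?expR_gt0 //.
by have := expR_ge1Dx (- x); lra.
Qed.

Lemma expR_le_quadratic x : expR x <= 1 + x + x ^+ 2 * expR `|x|.
Proof.
have ex_gt0 := expR_gt0 x.
have exNx := expRxMexpNx_1 x.
have [x_ge0|x_lt0] := lerP 0 x.
  rewrite ger0_norm //.
  have ex_sub1 : expR x - 1 <= x * expR x by have := expR_ge1Dx (- x); nra.
  have : x * (expR x - 1) <= x * (x * expR x) by rewrite ler_wpM2l.
  lra.
rewrite ltr0_norm //.
have := expR_mul1B_le1 _ (lt_trans x_lt0 ltr01).
have : 1 <= expR (- x) by rewrite -expR0 ler_expR; lra.
by have := expR_ge1Dx x; nra.
Qed.

Lemma expR1_ge : 9 / 4 <= expR 1 :> R.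
Proof.
have -> : 1 = 2%:R * (1 / 2) :> R by lra.
rewrite expRM_natl.
have : 3 / 2 <= expR (1 / 2) :> R by have := expR_ge1Dx (1 / 2 : R); lra.
move=> e12; have : (3 / 2) ^+ 2 <= expR (1 / 2) ^+ 2 :> R.
  by rewrite lerXn2r ?nnegrE ?expR_ge0 //; lra.
lra.
Qed.

Lemma expR1_le3 : expR 1 <= 3 :> R.
Proof.
have -> : 1 = 6%:R * (1 / 6) :> R by lra.
rewrite expRM_natl.
have : expR (1 / 6) * (1 - 1 / 6) <= 1 :> R by apply: expR_mul1B_le1; lra.
move=> e16; have : expR (1 / 6) ^+ 6 <= (6 / 5) ^+ 6 :> R.
  by rewrite lerXn2r ?nnegrE ?expR_ge0 //; lra.
lra.
Qed.

Lemma ln3_ge1 : 1 <= ln 3 :> R.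
Proof. by rewrite -[leLHS]expRK ler_ln ?posrE ?expR_gt0 ?expR1_le3. Qed.

Lemma ln2_le : ln 2 <= 3 / 4 :> R.
Proof.
rewrite -[leRHS]expRK ler_ln ?posrE ?expR_gt0 //.
have -> : 3 / 4 = 8%:R * (3 / 32) :> R by lra.
rewrite expRM_natl.
have : 35 / 32 <= expR (3 / 32) :> R by have := expR_ge1Dx (3 / 32 : R); lra.
move=> e332; have : (35 / 32) ^+ 8 <= expR (3 / 32) ^+ 8 :> R.
  by rewrite lerXn2r ?nnegrE ?expR_ge0 //; lra.
lra.
Qed.

Lemma mulr_expRN_le c x : 0 < c -> x * expR (- (c * x)) <= (c * expR 1)^-1.
Proof.
move=> c_gt0.
have e_gt0 : 0 < expR 1 :> R := expR_gt0 1.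
have ecx : expR 1 * (c * x) <= expR (c * x).
  have -> : expR (c * x) = expR 1 * expR (c * x - 1) by rewrite -expRD; congr expR; lra.
  by rewrite ler_pM2l //; have := expR_ge1Dx (c * x - 1); lra.
rewrite -[leRHS]mul1r ler_pdivlMr ?mulr_gt0 //.
have -> : x * expR (- (c * x)) * (c * expR 1) = expR 1 * (c * x) * expR (- (c * x)) by ring.
by rewrite -[leRHS](expRxMexpNx_1 (c * x)) ler_pM2r ?expR_gt0.
Qed.

Lemma ln_prod (I : finType) (F : I -> R) : (forall i, 0 < F i) ->
  ln (\prod_i F i) = \sum_i ln (F i).
Proof.
move=> F_gt0.
suff [] : ln (\prod_i F i) = \sum_i ln (F i) /\ 0 < \prod_i F i by [].
elim/big_rec2: _ => [|i y1 y2 _ [IH y2_gt0]]; first by rewrite ln1.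
by rewrite lnM ?posrE // IH mulr_gt0.
Qed.

Lemma chernoff_abs {T : finType} (P S : T -> R) (t lam : R) :
  (forall i, 0 <= P i) -> 0 <= lam ->
  \sum_(i | t < `|S i|) P i <=
  expR (- (lam * t)) * (\sum_i P i * expR (lam * S i) + \sum_i P i * expR (- lam * S i)).
Proof.
move=> P_ge0 lam_ge0.
rewrite -big_split /= mulr_sumr big_mkcond /=; apply: ler_sum => i _.
have e_gt0 := expR_gt0 (- (lam * t)).
have e1_gt0 := expR_gt0 (lam * S i); have e2_gt0 := expR_gt0 (- lam * S i).
case: ifP => [t_lt|_]; last by rewrite mulr_ge0 ?addr_ge0 ?mulr_ge0 ?expR_ge0.
have markov : 1 <= expR (- (lam * t)) * (expR (lam * S i) + expR (- lam * S i)).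
  rewrite mulrDr -!expRD.
  have [S_ge0|S_lt0] := lerP 0 (S i); move: t_lt.
    rewrite ger0_norm // => t_lt.
    have : 1 <= expR (- (lam * t) + lam * S i) by rewrite -expR0 ler_expR; nra.
    by have := expR_gt0 (- (lam * t) + - lam * S i); lra.
  rewrite ltr0_norm // => t_lt.
  have : 1 <= expR (- (lam * t) + - lam * S i) by rewrite -expR0 ler_expR; nra.
  by have := expR_gt0 (- (lam * t) + lam * S i); lra.
rewrite [leRHS](_ : _ = P i * (expR (- (lam * t)) * (expR (lam * S i) + expR (- lam * S i)))).
  exact: ler_peMr.
by ring.
Qed.

Lemma tilted_term_le_small u H l s : 0 <= u <= 2 * l -> 0 <= H <= l ->
  0 <= s -> s * l <= 1 / 24 -> (u - H) ^+ 2 * expR (s * (u + H)) <= 32 / 7 * l ^+ 2.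
Proof.
move=> /andP[u_ge0 u_le] /andP[H_ge0 H_le] s_ge0 sl.
have exp_le : expR (s * (u + H)) <= 8 / 7.
  have : s * (u + H) <= 1 / 8 by nra.
  rewrite -ler_expR => /le_trans; apply.
  have : expR (1 / 8) * (1 - 1 / 8) <= 1 :> R by apply: expR_mul1B_le1; lra.
  lra.
have -> : 32 / 7 * l ^+ 2 = 4 * l ^+ 2 * (8 / 7) by ring.
by apply: ler_pM; rewrite ?sqr_ge0 ?expR_ge0 //; nra.
Qed.

Lemma tilted_term_le_large u H l s : 2 * l < u -> 0 <= H <= l -> 1 <= l ->
  0 <= s -> s * l <= 1 / 24 ->
  expR (- u) * (u - H) ^+ 2 * expR (s * (u + H)) <= 5 * expR (- l).
Proof.
move=> u_gt /andP[H_ge0 H_le] l_ge1 s_ge0 sl.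
have s_le : s <= 1 / 24 by nra.
have exp_le : expR (s * (u + H)) <= expR (u / 16) by rewrite ler_expR; nra.
have sqr_le : (u - H) ^+ 2 <= u ^+ 2 by nra.
have split_exp : expR (- u) * u ^+ 2 * expR (u / 16) =
    expR (- (u / 2)) * (u * expR (- (7 / 32 * u))) ^+ 2.
  have e : expR (- u) * expR (u / 16) = expR (- (u / 2)) * expR (- (7 / 32 * u) * 2%:R).
    by rewrite -!expRD; congr expR; lra.
  by rewrite exprMn -expRM_natr mulrAC e; ring.
have peak : u * expR (- (7 / 32 * u)) <= 128 / 63.
  have c_gt0 : 0 < 7 / 32 :> R by lra.
  apply: le_trans (mulr_expRN_le _ u c_gt0) _.
  rewrite -[leRHS]invrK lef_pV2 ?posrE ?mulr_gt0 ?expR_gt0 // invf_div.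
  by have := expR1_ge; lra.
apply: le_trans (_ : expR (- u) * u ^+ 2 * expR (u / 16) <= _).
  apply: ler_pM; rewrite ?expR_ge0 //; first by rewrite mulr_ge0 ?expR_ge0 ?sqr_ge0.
  by rewrite ler_pM2l ?expR_gt0.
rewrite split_exp mulrC; apply: ler_pM; rewrite ?sqr_ge0 ?expR_ge0 //.
- have peak_ge0 : 0 <= u * expR (- (7 / 32 * u)) by rewrite mulr_ge0 ?expR_ge0 //; lra.
  have : (u * expR (- (7 / 32 * u))) ^+ 2 <= (128 / 63) ^+ 2.
    by rewrite lerXn2r ?nnegrE //; lra.
  lra.
- by rewrite ler_expR; lra.
Qed.

(* With [u = - ln p(y)] and [H] the entropy in nats, the left-hand side is the
   summand of the tilted variance in [tilted_variance_le]. *)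
Lemma tilted_term_le u H l s : 0 <= u -> 0 <= H <= l -> 1 <= l ->
  0 <= s -> s * l <= 1 / 24 ->
  expR (- u) * (u - H) ^+ 2 * expR (s * (u + H)) <=
  32 / 7 * l ^+ 2 * expR (- u) + 5 * expR (- l).
Proof.
move=> u_ge0 Hl l_ge1 s_ge0 sl.
have small_ge0 : 0 <= 32 / 7 * l ^+ 2 * expR (- u).
  by rewrite mulr_ge0 ?expR_ge0 // mulr_ge0 ?sqr_ge0.
have large_ge0 : 0 <= 5 * expR (- l) by rewrite mulr_ge0 ?expR_ge0.
have [u_le|u_gt] := lerP u (2 * l).
  have small : (u - H) ^+ 2 * expR (s * (u + H)) <= 32 / 7 * l ^+ 2.
    by apply: tilted_term_le_small; rewrite ?u_ge0 ?u_le.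
  have := ler_wpM2l (expR_ge0 (- u)) small.
  by rewrite mulrA (mulrC _ (32 / 7 * l ^+ 2)); lra.
by have := tilted_term_le_large _ _ _ _ u_gt Hl l_ge1 s_ge0 sl; lra.
Qed.
End ExpLnBounds.

Section LnMax3.
Variable R : realType.

Definition lnmax3 (d : nat) : R := ln (maxn d 3)%:R.

Lemma lnmax3_ge1 d : 1 <= lnmax3 d.
Proof.
apply: le_trans ln3_ge1 _.
by rewrite ler_ln ?posrE ?ltr0n ?ler_nat ?leq_maxr // (leq_trans _ (leq_maxr _ _)).
Qed.

Lemma ln_le_lnmax3 d : ln d%:R <= lnmax3 d.
Proof.
case: d => [|d]; first by rewrite ln0 // (le_trans ler01 (lnmax3_ge1 _)).
rewrite ler_ln ?posrE ?ltr0n ?ler_nat ?leq_maxl //.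
by rewrite (leq_trans _ (leq_maxr _ _)).
Qed.

Lemma mulr_expRN_lnmax3 d : d%:R * expR (- lnmax3 d) <= 1.
Proof.
have m_gt0 : 0 < (maxn d 3)%:R :> R by rewrite ltr0n (leq_trans _ (leq_maxr _ _)).
rewrite expRN lnK ?posrE // ler_pdivrMr // mul1r ler_nat.
exact: leq_maxl.
Qed.

End LnMax3.

Section Letter.
Context {R : realType} {Y : finType} (p : Y -> R).

Definition entropy_nats : R := \sum_y p y * - ln (p y).

Lemma entropyE : entropy p = entropy_nats / ln 2.
Proof.
rewrite /entropy /entropy_nats mulr_suml -sumrN; apply: eq_bigr => y _.
by case: eqP => [->|_]; rewrite ?mul0r ?oppr0 // /log2 mulrN mulNr mulrA.
Qed.

Hypothesis p_pmf : is_pmf p.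

Lemma pmf_le1 y : p y <= 1.
Proof.
case: p_pmf => p_ge0 <-; rewrite (bigD1 y) //= lerDl.
by apply: sumr_ge0 => z _; exact: p_ge0.
Qed.

Lemma self_info_ge0 y : 0 <= - ln (p y).
Proof. by rewrite oppr_ge0 ln_le0 ?pmf_le1. Qed.

Lemma entropy_nats_ge0 : 0 <= entropy_nats.
Proof. by apply: sumr_ge0 => y _; rewrite mulr_ge0 ?self_info_ge0 ?p_pmf.1. Qed.

Lemma card_pmf_gt0 : (0 < #|Y|)%N.
Proof.
rewrite lt0n; apply/eqP => Y0; case: p_pmf => _.
by rewrite big_pred0 => [/eqP|]; [rewrite eq_sym oner_eq0 | exact: card0_eq].
Qed.

(* Gibbs' inequality against the uniform distribution, via ln x <= x - 1. *)
Lemma entropy_nats_le_ln_card : entropy_nats <= ln #|Y|%:R.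
Proof.
set d : R := #|Y|%:R.
have d_gt0 : 0 < d by rewrite ltr0n card_pmf_gt0.
have term_le y : p y * - ln (p y) <= p y * ln d + (d^-1 - p y).
  have [->|py_neq0] := eqVneq (p y) 0; first by rewrite !mul0r add0r subr0 invr_ge0 ltW.
  have py_gt0 : 0 < p y by rewrite lt_def py_neq0 p_pmf.1.
  have dp_gt0 : 0 < (d * p y)^-1 by rewrite invr_gt0 mulr_gt0.
  have : -1 < (d * p y)^-1 - 1 by lra.
  move/le_ln1Dx; rewrite [1 + _]addrC subrK.
  rewrite lnV ?posrE ?mulr_gt0 // lnM ?posrE // => /(ler_wpM2l (ltW py_gt0)).
  have -> : p y * ((d * p y)^-1 - 1) = d^-1 - p y by field; rewrite !gt_eqF.
  lra.
apply: le_trans (ler_sum _ (fun y _ => term_le y)) _.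
rewrite !big_split /= -big_distrl /= sumr_const sumrN p_pmf.2.
by rewrite -[d^-1 *+ _]mulr_natr mulVf ?gt_eqF // mul1r subrr addr0.
Qed.

Let l := lnmax3 R #|Y|.

Lemma entropy_nats_le_lnmax3 : entropy_nats <= l.
Proof. exact: le_trans entropy_nats_le_ln_card (ln_le_lnmax3 R #|Y|). Qed.

Lemma centered_info_mean0 : \sum_y p y * (- ln (p y) - entropy_nats) = 0.
Proof.
under eq_bigr do rewrite mulrBr.
by rewrite sumrB -big_distrl /= p_pmf.2 mul1r subrr.
Qed.

Lemma tilted_variance_le s : 0 <= s -> s * l <= 1 / 24 ->
  \sum_y p y * (- ln (p y) - entropy_nats) ^+ 2 * expR (s * (- ln (p y) + entropy_nats))
    <= 12 * l ^+ 2.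
Proof.
move=> s_ge0 sl.
have l_ge1 : 1 <= l := lnmax3_ge1 R #|Y|.
have H_bounds : 0 <= entropy_nats <= l by rewrite entropy_nats_ge0 entropy_nats_le_lnmax3.
have term_le y :
    p y * (- ln (p y) - entropy_nats) ^+ 2 * expR (s * (- ln (p y) + entropy_nats)) <=
    32 / 7 * l ^+ 2 * p y + 5 * expR (- l).
  have [->|py_neq0] := eqVneq (p y) 0.
    by rewrite !mul0r mulr0 add0r mulr_ge0 ?expR_ge0.
  have py_gt0 : 0 < p y by rewrite lt_def py_neq0 p_pmf.1.
  have := @tilted_term_le R (- ln (p y)) entropy_nats l s
    (self_info_ge0 y) H_bounds l_ge1 s_ge0 sl.
  by rewrite opprK lnK.
apply: le_trans (ler_sum _ (fun y _ => term_le y)) _.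
rewrite big_split /= -big_distrr /= p_pmf.2 mulr1 sumr_const -mulr_natr.
have := mulr_expRN_lnmax3 R #|Y|; rewrite -/l => card_le.
have : 1 <= l ^+ 2 by rewrite expr2; nra.
lra.
Qed.

Lemma info_mgf_le lam : `|lam| * l <= 1 / 24 ->
  \sum_y p y * expR (lam * (- ln (p y) - entropy_nats)) <= expR (12 * lam ^+ 2 * l ^+ 2).
Proof.
move=> lam_l.
set Z := fun y => - ln (p y) - entropy_nats.
set V := \sum_y p y * Z y ^+ 2 * expR (`|lam| * (- ln (p y) + entropy_nats)).
have term_le y : p y * expR (lam * Z y) <= p y + lam * (p y * Z y) +
    lam ^+ 2 * (p y * Z y ^+ 2 * expR (`|lam| * (- ln (p y) + entropy_nats))).
  have Z_le : `|lam * Z y| <= `|lam| * (- ln (p y) + entropy_nats).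
    rewrite normrM ler_wpM2l //.
    by have := self_info_ge0 y; have := entropy_nats_ge0; rewrite /Z; case: ler0P; lra.
  apply: le_trans (ler_wpM2l (p_pmf.1 y) (expR_le_quadratic (lam * Z y))) _.
  rewrite [leRHS](_ : _ = p y * (1 + lam * Z y +
    (lam * Z y) ^+ 2 * expR (`|lam| * (- ln (p y) + entropy_nats)))); last by ring.
  by rewrite ler_wpM2l ?p_pmf.1 // lerD2l ler_wpM2l ?sqr_ge0 // ler_expR.
have V_le : V <= 12 * l ^+ 2 by apply: tilted_variance_le; rewrite ?normr_ge0.
apply: le_trans (ler_sum _ (fun y _ => term_le y)) _.
rewrite !big_split /= -!big_distrr /= centered_info_mean0 p_pmf.2 mulr0 addr0.
rewrite -/V; apply: le_trans (expR_ge1Dx _).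
by have := ler_wpM2l (sqr_ge0 lam) V_le; lra.
Qed.
End Letter.

Section Product.
Context {R : realType} {X : Type} {Y : finType} (W : X -> Y -> R).
Context {n : nat} (xn : 'I_n -> X).
Hypothesis W_pmf : forall i, is_pmf (W (xn i)).

Local Notation P := (prodW W xn).

Lemma sum_ffun_prod (F : 'I_n -> Y -> R) :
  \sum_(yn : {ffun 'I_n -> Y}) \prod_i F i (yn i) = \prod_i \sum_y F i y.
Proof. by rewrite bigA_distr_bigA. Qed.

Lemma prodW_pmf : is_pmf P.
Proof.
split=> [yn|]; first by apply: prodr_ge0 => i _; exact: (W_pmf i).1.
by rewrite (sum_ffun_prod (fun i => W (xn i))) big1 // => i _; exact: (W_pmf i).2.
Qed.

Lemma sum_prodW_marginal i (F : Y -> R) :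
  \sum_yn P yn * F (yn i) = \sum_y W (xn i) y * F y.
Proof.
pose G j y := if j == i then W (xn j) y * F y else W (xn j) y.
have -> : \sum_yn P yn * F (yn i) = \sum_(yn : {ffun 'I_n -> Y}) \prod_j G j (yn j).
  apply: eq_bigr => yn _; rewrite /prodW (bigD1 i) //= [RHS](bigD1 i) //= /G eqxx.
  by rewrite mulrAC; congr (_ * _); apply: eq_bigr => j j_neq; rewrite (negbTE j_neq).
rewrite sum_ffun_prod (bigD1 i) //= [X in _ * X]big1 ?mulr1 => [|j j_neq].
  by rewrite /G eqxx.
by rewrite /G (negbTE j_neq); exact: (W_pmf j).2.
Qed.

Lemma ln_prodW yn : 0 < P yn -> ln (P yn) = \sum_i ln (W (xn i) (yn i)).
Proof.
move=> P_gt0; apply: ln_prod => i; rewrite lt_def (W_pmf i).1 andbT.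
by apply: contraTneq P_gt0 => W0; rewrite /prodW (bigD1 i) //= W0 mul0r ltxx.
Qed.

Lemma entropy_nats_prodW : entropy_nats P = \sum_i entropy_nats (W (xn i)).
Proof.
have term_eq yn : P yn * - ln (P yn) = \sum_i P yn * - ln (W (xn i) (yn i)).
  have [P0|P_neq0] := eqVneq (P yn) 0; first by rewrite P0 mul0r big1 // => i; rewrite mul0r.
  have P_gt0 : 0 < P yn by rewrite lt_def P_neq0 prodW_pmf.1.
  by rewrite ln_prodW // -sumrN mulr_sumr.
rewrite /entropy_nats (eq_bigr _ (fun yn _ => term_eq yn)) exchange_big /=.
by apply: eq_bigr => i _; exact: sum_prodW_marginal.
Qed.

Definition info_dev (yn : {ffun 'I_n -> Y}) : R :=
  \sum_i (- ln (W (xn i) (yn i)) - entropy_nats (W (xn i))).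

Lemma log2_prodW_add_entropy yn : 0 < P yn ->
  log2 (P yn) + entropy P = - info_dev yn / ln 2.
Proof.
move=> P_gt0; rewrite entropyE entropy_nats_prodW /log2 ln_prodW //.
by rewrite /info_dev sumrB sumrN; ring.
Qed.

Lemma typical_set_compl_le delta :
  1 - prodW_prob W xn (typical_set W delta xn) <=
  \sum_(yn : {ffun 'I_n -> Y} | delta * Num.sqrt n%:R * ln 2 < `|info_dev yn|) P yn.
Proof.
have ln2_gt0 : 0 < ln 2 :> R by rewrite ln_gt0 // ltr1n.
rewrite -[X in X - _ <= _]prodW_pmf.2 (bigID (mem (typical_set W delta xn))) /=.
rewrite [X in X - _]addrC addrK.
rewrite big_mkcond [leRHS]big_mkcond /=; apply: ler_sum => yn _.
have P_ge0 := prodW_pmf.1 yn.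
case: ifPn => [notT|_]; last by case: ifP.
have [P0|P_neq0] := eqVneq (P yn) 0; first by rewrite P0; case: ifP.
have P_gt0 : 0 < P yn by rewrite lt_def P_neq0.
rewrite ifT //; move: notT; rewrite inE -ltNge log2_prodW_add_entropy //.
by rewrite normrM normrN ger0_norm ?invr_ge0 ?ltW // ltr_pdivlMr.
Qed.

Let l := lnmax3 R #|Y|.

Lemma info_dev_mgf_le lam : `|lam| * l <= 1 / 24 ->
  \sum_yn P yn * expR (lam * info_dev yn) <= expR (n%:R * (12 * lam ^+ 2 * l ^+ 2)).
Proof.
move=> lam_l.
have -> : \sum_yn P yn * expR (lam * info_dev yn) =
    \prod_i \sum_y W (xn i) y * expR (lam * (- ln (W (xn i) y) - entropy_nats (W (xn i)))).
  rewrite -sum_ffun_prod; apply: eq_bigr => yn _.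
  by rewrite /info_dev mulr_sumr expR_sum -big_split.
rewrite expRM_natl -[n in _ ^+ n]card_ord -prodr_const.
apply: ler_prod => i _; rewrite sumr_ge0 => [|y _]; last first.
  by rewrite mulr_ge0 ?expR_ge0 ?(W_pmf i).1.
exact: info_mgf_le.
Qed.

Lemma info_dev_tail t : (0 < n)%N -> 0 <= t <= n%:R * l ->
  \sum_(yn : {ffun 'I_n -> Y} | t < `|info_dev yn|) P yn <=
  2 * expR (- (t ^+ 2 / (48 * n%:R * l ^+ 2))).
Proof.
move=> n_gt0 /andP[t_ge0 t_le].
have l_gt0 : 0 < l by apply: lt_le_trans (lnmax3_ge1 R #|Y|); rewrite ltr01.
have n_pos : 0 < n%:R :> R by rewrite ltr0n.
set lam := t / (24 * n%:R * l ^+ 2).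
have lam_ge0 : 0 <= lam by rewrite divr_ge0 // ltW // !mulr_gt0 // exprn_gt0.
have lam_l : `|lam| * l <= 1 / 24.
  rewrite ger0_norm // (_ : lam * l = t / (n%:R * l) / 24); last first.
    by rewrite /lam; field; rewrite !gt_eqF.
  by rewrite ler_pM2r ?invr_gt0 // ler_pdivrMr ?mulr_gt0 // mul1r.
have lamN_l : `|- lam| * l <= 1 / 24 by rewrite normrN.
apply: le_trans (chernoff_abs P info_dev t lam prodW_pmf.1 lam_ge0) _.
have mgf := info_dev_mgf_le _ lam_l.
have mgfN := info_dev_mgf_le _ lamN_l; rewrite sqrrN in mgfN.
have -> : - (t ^+ 2 / (48 * n%:R * l ^+ 2)) =
    - (lam * t) + n%:R * (12 * lam ^+ 2 * l ^+ 2).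
  by rewrite /lam; field; rewrite !gt_eqF.
by rewrite expRD mulrCA ler_wpM2l ?expR_ge0 //; lra.
Qed.
End Product.

Section Exponents.
Variable R : realType.

Lemma typical_radius_le (delta : R) n d : delta <= Num.sqrt n%:R * log2 d%:R ->
  delta * Num.sqrt n%:R * ln 2 <= n%:R * lnmax3 R d.
Proof.
move=> delta_le.
have ln2_gt0 : 0 < ln 2 :> R by rewrite ln_gt0 // ltr1n.
have sqrt_ge0 := sqrtr_ge0 (n%:R : R).
apply: le_trans (_ : _ <= Num.sqrt n%:R * log2 d%:R * Num.sqrt n%:R * ln 2) _.
  by rewrite ler_pM2r // ler_wpM2r.
have -> : Num.sqrt n%:R * log2 d%:R * Num.sqrt n%:R * ln 2 = n%:R * ln d%:R :> R.
  rewrite [LHS](_ : _ = Num.sqrt n%:R ^+ 2 * (ln d%:R / ln 2 * ln 2)); last first.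
    by rewrite /log2; ring.
  by rewrite sqr_sqrtr ?ler0n // mulfVK ?gt_eqF.
by rewrite ler_wpM2l ?ler0n ?ln_le_lnmax3.
Qed.

Lemma expR_gauss_le_exp2 (delta : R) n d : (0 < n)%N ->
  expR (- ((delta * Num.sqrt n%:R * ln 2) ^+ 2 / (48 * n%:R * lnmax3 R d ^+ 2))) <=
  exp2 (- (delta ^+ 2 / (36 * Kconst R d))).
Proof.
move=> n_gt0.
have ln2_gt0 : 0 < ln 2 :> R by rewrite ln_gt0 // ltr1n.
have l_gt0 : 0 < lnmax3 R d by apply: lt_le_trans (lnmax3_ge1 R d); rewrite ltr01.
have n_pos : 0 < n%:R :> R by rewrite ltr0n.
set a := delta ^+ 2 * ln 2 ^+ 2 / lnmax3 R d ^+ 2.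
have a_ge0 : 0 <= a by apply: divr_ge0; [apply: mulr_ge0|]; exact: sqr_ge0.
have -> : (delta * Num.sqrt n%:R * ln 2) ^+ 2 / (48 * n%:R * lnmax3 R d ^+ 2) = a / 48.
  rewrite !exprMn sqr_sqrtr ?ler0n // /a.
  by field; rewrite !gt_eqF.
have -> : exp2 (- (delta ^+ 2 / (36 * Kconst R d))) = expR (- (a * ln 2 / 36)).
  rewrite /exp2 /powR (negbTE (_ : (2 : R) != 0)) ?pnatr_eq0 //.
  by congr expR; rewrite /Kconst /log2 /a -/(lnmax3 R d); field; rewrite !gt_eqF.
by rewrite ler_expR; have := @ln2_le R; nra.
Qed.

End Exponents.

Theorem lemma1 (R : realType) (d : measure_display) (X : measurableType d)
  (Y : finType) (W : X -> Y -> R)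
  (HWpmf : forall x, is_pmf (W x))
  (HWmeas : forall y, measurable_fun setT (fun x => W x y))
  (n : nat) (delta : R)
  (Hdelta0 : 0 < delta)
  (Hdelta1 : delta <= Num.sqrt (n%:R) * log2 (#|Y|%:R))
  (xn : 'I_n -> X) :
  prodW_prob W xn (typical_set W delta xn)
    >= 1 - 2 * exp2 (- (delta ^+ 2 / (36 * Kconst R #|Y|))).
Proof.
have n_gt0 : (0 < n)%N.
  by rewrite lt0n; apply: contraTneq Hdelta1 => ->; rewrite sqrtr0 mul0r -ltNge.
have W_pmf i : is_pmf (W (xn i)) := HWpmf (xn i).
have t_bounds : 0 <= delta * Num.sqrt n%:R * ln 2 <= n%:R * lnmax3 R #|Y|.
  by rewrite typical_radius_le // !mulr_ge0 ?sqrtr_ge0 ?ln_ge0 ?ler1n ?ltW.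
rewrite lerBlDr -lerBlDl.
apply: le_trans (typical_set_compl_le W xn W_pmf delta) _.
apply: le_trans (info_dev_tail W xn W_pmf _ n_gt0 t_bounds) _.
by rewrite ler_pM2l // expR_gauss_le_exp2.
Qed.
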